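(* Let $F$ be a field of characteristic different from $2$ and $3$ such that $F^2=F$. Let $K_{10}=F\cdot 1\oplus(K_3\otimes K_3)$ be the Kac Jordan superalgebra in the realization described in the context, with $W=(K_3)_{\bar 1}$. Let $G=Sp(W)\wr C_2=(Sp(W)\times Sp(W))\rtimes C_2$, where $C_2=\{1,\epsilon\}$ and $(f,g)\epsilon=\epsilon(g,f)$. Let $\Phi\colon G\to\mathrm{Aut}(K_{10})$ be the group homomorphism determined by: for $(f,g)\in Sp(W)\times Sp(W)$, $\Phi_{(f,g)}(1)=1$ and $\Phi_{(f,g)}(a\otimes b)=\tilde f(a)\otimes\tilde g(b)$, where for $h\in Sp(W)$, $\tilde h$ is the automorphism of $K_3$ with $\tilde h(e)=e$ and $\tilde h(w)=h(w)$ for $w\in W$; and $\Phi(\epsilon)=\delta$, where $\delta(1)=1$ and $\delta(a\otimes b)=(-1)^{\bar a\bar b}\,b\otimes a$ for homogeneous $a,b\in K_3$. Then $\Phi$ is a group isomorphism; in particular $\mathrm{Aut}(K_{10})\cong Sp(W)\wr C_2$.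
   Context: The Kaplansky superalgebra $K_3$ has even part $Fe$ and odd part $W=Fx+Fy$, with products $e^2=e$, $e x=xe=\tfrac12 x$, $e y=ye=\tfrac12 y$, $xy=e$, $yx=-e$, $x^2=y^2=0$. It carries the supersymmetric bilinear form with $(e|e)=\tfrac12$, $(x|y)=1$, $(y|x)=-1$, $(x|x)=(y|y)=0$, and even and odd parts orthogonal. $Sp(W)$ is the group of linear maps of $W$ preserving the alternating form $(\,\cdot\,|\,\cdot\,)|_{W}$. $K_{10}=F\cdot 1\oplus(K_3\otimes K_3)$ is the superalgebra in which $1$ is an even identity element, $a\otimes b$ (for homogeneous $a,b\in K_3$) has parity $\bar a+\bar b$, and $(a\otimes b)(c\otimes d)=(-1)^{\bar b\bar c}\bigl(ac\otimes bd-\tfrac34(a|c)(b|d)1\bigr)$ for homogeneous $a,b,c,d\in K_3$; this is (isomorphic to) the $10$-dimensional Kac Jordan superalgebra. $\mathrm{Aut}(K_{10})$ denotes the group of automorphisms of graded algebras. *)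

From HB Require Import structures.
From mathcomp Require Import all_boot all_order all_algebra.
Set Implicit Arguments. Unset Strict Implicit. Unset Printing Implicit Defensive.
Import Order.TTheory GRing.Theory Num.Theory.
Local Open Scope ring_scope.

Section Kac.
Variable F : fieldType.

(* K_3 : basis indexed by 'I_3 ; 0 = e (even), 1 = x, 2 = y (odd). *)
Definition K3 := {ffun 'I_3 -> F}.
Definition par (i : 'I_3) : bool := val i != 0%N.
Definition sgn (b : bool) : F := if b then -1 else 1.
Definition e3 (j : 'I_3) : K3 := [ffun t => (t == j)%:R].
Definition sc3 (c : F) (a : K3) : K3 := [ffun t => c * a t].

Definition mult3 (i k : 'I_3) : K3 :=
  match val i, val k with
  | 0%N, 0%N => e3 (inord 0)
  | 0%N, _ => sc3 (2%:R^-1) (e3 k)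
  | _, 0%N => sc3 (2%:R^-1) (e3 i)
  | 1%N, 2%N => e3 (inord 0)
  | 2%N, 1%N => sc3 (-1) (e3 (inord 0))
  | _, _ => [ffun => 0]
  end.

Definition form3 (i k : 'I_3) : F :=
  match val i, val k with
  | 0%N, 0%N => 2%:R^-1
  | 1%N, 2%N => 1
  | 2%N, 1%N => -1
  | _, _ => 0
  end.

(* K_10 = F.1 (+) K_3 (x) K_3 ; coordinates: None = 1, Some (i,j) = e_i (x) e_j *)
Definition K10 := {ffun option ('I_3 * 'I_3) -> F}.
Definition one10 : K10 := [ffun t => if t is None then 1 else 0].
Definition tens (a b : K3) : K10 :=
  [ffun t => match t with None => 0 | Some (i, j) => a i * b j end].
Definition tpart (u : K10) : K10 := [ffun t => if t is None then 0 else u t].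

Definition mul10 (u v : K10) : K10 :=
  [ffun t => u None * v None * one10 t + u None * tpart v t + v None * tpart u t
    + \sum_(i : 'I_3) \sum_(j : 'I_3) \sum_(k : 'I_3) \sum_(l : 'I_3)
        u (Some (i, j)) * v (Some (k, l)) * sgn (par j && par k) *
        (tens (mult3 i k) (mult3 j l) t
          - 3%:R / 4%:R * form3 i k * form3 j l * one10 t)].

Definition is_even10 (v : K10) : Prop :=
  forall i j : 'I_3, par i != par j -> v (Some (i, j)) = 0.
Definition is_odd10 (v : K10) : Prop :=
  v None = 0 /\ forall i j : 'I_3, par i = par j -> v (Some (i, j)) = 0.

Definition isAut10 (phi : K10 -> K10) : Prop :=
  [/\ (forall (a : F) (u v : K10),
         phi [ffun t => a * u t + v t] = [ffun t => a * phi u t + phi v t]),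
      bijective phi,
      (forall u v : K10, phi (mul10 u v) = mul10 (phi u) (phi v)),
      (forall v, is_even10 v -> is_even10 (phi v)) &
      (forall v, is_odd10 v -> is_odd10 (phi v))].

(* W = F x + F y, coordinates as column vectors (x-coordinate, y-coordinate) *)
Definition omega (u v : 'cV[F]_2) : F := u 0 0 * v 1 0 - u 1 0 * v 0 0.
Definition isSp (h : 'M[F]_2) : Prop :=
  h \in unitmx /\ forall u v : 'cV[F]_2, omega (h *m u) (h *m v) = omega u v.

Definition wpart (a : K3) : 'cV[F]_2 := \col_(r < 2) a (lift ord0 r).
Definition htil (h : 'M[F]_2) (a : K3) : K3 :=
  [ffun t => if unlift ord0 t is Some r then (h *m wpart a) r ord0 else a t].

Definition PhiSp (f g : 'M[F]_2) (v : K10) : K10 :=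
  [ffun t => v None * one10 t
     + \sum_(i : 'I_3) \sum_(j : 'I_3)
         v (Some (i, j)) * tens (htil f (e3 i)) (htil g (e3 j)) t].

Definition delta (v : K10) : K10 :=
  [ffun t => match t with
             | None => v None
             | Some (i, j) => sgn (par i && par j) * v (Some (j, i))
             end].

(* elements of Sp(W) wr C_2 as triples (f, g, b) = (f,g) eps^b *)
Definition Phi (w : 'M[F]_2 * 'M[F]_2 * bool) (v : K10) : K10 :=
  PhiSp w.1.1 w.1.2 (if w.2 then delta v else v).

(* (f,g) eps = eps (g,f) *)
Definition Gmul (w1 w2 : 'M[F]_2 * 'M[F]_2 * bool) : 'M[F]_2 * 'M[F]_2 * bool :=
  let: (f1, g1, b1) := w1 in let: (f2, g2, b2) := w2 in
  if b1 then (f1 *m g2, g1 *m f2, ~~ b2) else (f1 *m f2, g1 *m g2, b2).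

Definition inG (w : 'M[F]_2 * 'M[F]_2 * bool) : Prop := isSp w.1.1 /\ isSp w.1.2.

End Kac.

From HB Require Import structures.
From mathcomp Require Import all_boot all_order all_algebra ring.
Import GRing.Theory.
Set Implicit Arguments. Unset Strict Implicit. Unset Printing Implicit Defensive.
Local Open Scope ring_scope.

(* The map
   Phi_(f,g) intertwines the product of K_10 with the product whose W-part in
   the two tensor factors is scaled by det f and det g, so it is an automorphism
   for symplectic f and g; delta is checked directly.
   Conversely, let phi be an automorphism.  It fixes 1, and it fixes e (x) e,
   the even element acting as 1/2 on the odd part with
   (e (x) x)(e (x) y) = -3/8 + e (x) e.  Odd u, v with uv = (e (x) x)(e (x) y)
   lie both in e (x) W or both in W (x) e, and phi cannot send e (x) x and
   x (x) e into the same half: their product has a nonzero W (x) W component,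
   while products within a half lie in F 1 + F e (x) e, which phi fixes.  So up
   to delta, phi preserves e (x) W and W (x) e, acting there by matrices g and f
   of determinant 1, and phi = Phi_(f,g) since the odd part generates K_10. *)

Definition o0 : 'I_3 := @Ordinal 3 0 isT.
Definition o1 : 'I_3 := @Ordinal 3 1 isT.
Definition o2 : 'I_3 := @Ordinal 3 2 isT.

Lemma ord3P (i : 'I_3) : [\/ i = o0, i = o1 | i = o2].
Proof.
by case: i => [[|[|[|n]]] Hi]; [apply: Or31|apply: Or32|apply: Or33|]; try apply: val_inj.
Qed.

Lemma ord2P (i : 'I_2) : i = 0 \/ i = 1.
Proof. by case: i => [[|[|n]] Hi]; [left|right|]; try apply: val_inj. Qed.

Lemma big_ord3 (V : nmodType) (G : 'I_3 -> V) : \sum_(i < 3) G i = G o0 + G o1 + G o2.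
Proof.
rewrite !big_ord_recl big_ord0 addr0 addrA; congr (G _ + G _ + G _); exact: val_inj.
Qed.

Lemma det_mx22 (R : comPzRingType) (A : 'M[R]_2) : \det A = A 0 0 * A 1 1 - A 0 1 * A 1 0.
Proof.
rewrite (expand_det_row A 0) !big_ord_recl big_ord0 addr0 /cofactor !det_mx11 !mxE /=.
have -> : lift 0 0 = 1 :> 'I_2 by apply: val_inj.
have -> : lift 1 0 = 0 :> 'I_2 by apply: val_inj.
rewrite expr0 expr1; ring.
Qed.

Lemma mulmx2E (R : pzRingType) m n (A : 'M[R]_(m, 2)) (B : 'M[R]_(2, n)) i j :
  (A *m B) i j = A i 0 * B 0 j + A i 1 * B 1 j.
Proof.
rewrite mxE !big_ord_recl big_ord0 addr0.
by congr (A i _ * B _ j + A i _ * B _ j); apply: val_inj.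
Qed.

Definition mx22 (R : Type) (a b c d : R) : 'M[R]_2 :=
  \matrix_(i, j) if i == 0 then (if j == 0 then a else b) else (if j == 0 then c else d).

Lemma mx22E (R : Type) (a b c d : R) :
  [/\ mx22 a b c d 0 0 = a, mx22 a b c d 0 1 = b, mx22 a b c d 1 0 = c & mx22 a b c d 1 1 = d].
Proof. by rewrite !mxE. Qed.

Lemma eq_mx22 (R : Type) (A B : 'M[R]_2) : A 0 0 = B 0 0 -> A 0 1 = B 0 1 ->
  A 1 0 = B 1 0 -> A 1 1 = B 1 1 -> A = B.
Proof. by move=> *; apply/matrixP => i j; case: (ord2P i) => ->; case: (ord2P j) => ->. Qed.

Lemma omega_mulmx (F : fieldType) (h : 'M[F]_2) (u v : 'cV[F]_2) :
  omega (h *m u) (h *m v) = \det h * omega u v.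
Proof. by rewrite /omega det_mx22 !mulmx2E; ring. Qed.

Lemma isSpP (F : fieldType) (h : 'M[F]_2) : isSp h <-> \det h = 1.
Proof.
split=> [[_ H]|dh]; last first.
  by split=> [|u v]; rewrite ?unitmxE ?dh ?unitr1 // omega_mulmx dh mul1r.
have := H (delta_mx 0 0) (delta_mx 1 0); rewrite omega_mulmx /omega !mxE /=.
by rewrite mulr0 subr0 !mulr1.
Qed.

Lemma unitmx22_col0 (R : comUnitRingType) (h : 'M[R]_2) :
  h \in unitmx -> h 0 0 = 0 -> h 1 0 = 0 -> False.
Proof. by move=> + h00 h10; rewrite unitmxE det_mx22 h00 h10 mul0r mulr0 subr0 unitr0. Qed.

Lemma lincomb1_eq0 (R : pzRingType) (P a x x' : R) : x = x' -> P = a * (x - x') -> P = 0.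
Proof. by move=> -> ->; rewrite subrr mulr0. Qed.

Lemma lincomb2_eq0 (R : pzRingType) (P a b x x' y y' : R) :
  x = x' -> y = y' -> P = a * (x - x') + b * (y - y') -> P = 0.
Proof. by move=> -> -> ->; rewrite !subrr !mulr0 addr0. Qed.

Lemma lincomb3_eq0 (R : pzRingType) (P a b c x x' y y' z z' : R) :
  x = x' -> y = y' -> z = z' ->
  P = a * (x - x') + b * (y - y') + c * (z - z') -> P = 0.
Proof. by move=> -> -> -> ->; rewrite !subrr !mulr0 !addr0. Qed.

Notation cN u := (u None).
Notation c00 u := (u (Some (o0, o0))).
Notation c01 u := (u (Some (o0, o1))).
Notation c02 u := (u (Some (o0, o2))).
Notation c10 u := (u (Some (o1, o0))).
Notation c11 u := (u (Some (o1, o1))).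
Notation c12 u := (u (Some (o1, o2))).
Notation c20 u := (u (Some (o2, o0))).
Notation c21 u := (u (Some (o2, o1))).
Notation c22 u := (u (Some (o2, o2))).
Notation lin10 a u v := [ffun t => a * u t + v t].

Section Kac.
Variable F : fieldType.
Hypothesis char2 : (2%:R : F) != 0.

(** * Coordinates on K_10 *)

Definition mk10_def (n a00 a01 a02 a10 a11 a12 a20 a21 a22 : F) : K10 F :=
  [ffun t => match t with
   | None => n
   | Some (i, j) =>
     match nat_of_ord i, nat_of_ord j with
     | 0, 0 => a00 | 0, 1 => a01 | 0, _ => a02
     | 1, 0 => a10 | 1, 1 => a11 | 1, _ => a12
     | _, 0 => a20 | _, 1 => a21 | _, _ => a22
     end
   end].
Fact mk10_key : unit. Proof. by []. Qed.
(* Locked, so that rewriting, [congr] and [ring] never unfold it. *)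
Definition mk10 := locked_with mk10_key mk10_def.
Canonical mk10_unlockable := [unlockable fun mk10].

Lemma mk10E (n a00 a01 a02 a10 a11 a12 a20 a21 a22 : F) :
  let u := mk10 n a00 a01 a02 a10 a11 a12 a20 a21 a22 in
  (cN u = n) * (c00 u = a00) * (c01 u = a01) * (c02 u = a02) * (c10 u = a10)
  * (c11 u = a11) * (c12 u = a12) * (c20 u = a20) * (c21 u = a21) * (c22 u = a22).
Proof. by rewrite /= unlock !ffunE. Qed.

Lemma K10E (u : K10 F) : u = mk10 (cN u) (c00 u) (c01 u) (c02 u) (c10 u) (c11 u)
  (c12 u) (c20 u) (c21 u) (c22 u).
Proof.
apply/ffunP => [[[i j]|]]; rewrite unlock ffunE //.
by case: (ord3P i) => ->; case: (ord3P j) => ->.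
Qed.

Lemma K10_ind (P : K10 F -> Prop) :
  (forall n a00 a01 a02 a10 a11 a12 a20 a21 a22,
     P (mk10 n a00 a01 a02 a10 a11 a12 a20 a21 a22)) -> forall u, P u.
Proof. by move=> H u; rewrite (K10E u); apply: H. Qed.

Ltac elim10 := apply: K10_ind => ? ? ? ? ? ? ? ? ? ?.

Lemma mk10_inj n a00 a01 a02 a10 a11 a12 a20 a21 a22 m b00 b01 b02 b10 b11 b12 b20 b21 b22 :
  mk10 n a00 a01 a02 a10 a11 a12 a20 a21 a22 = mk10 m b00 b01 b02 b10 b11 b12 b20 b21 b22 ->
  [/\ n = m, a00 = b00, a01 = b01, a02 = b02 &
  [/\ a10 = b10, a11 = b11, a12 = b12, a20 = b20 & a21 = b21 /\ a22 = b22]].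
Proof.
move=> E; have C t := congr1 (fun u : K10 F => u t) E.
move: (C None) (C (Some (o0, o0))) (C (Some (o0, o1))) (C (Some (o0, o2)))
  (C (Some (o1, o0))) (C (Some (o1, o1))) (C (Some (o1, o2)))
  (C (Some (o2, o0))) (C (Some (o2, o1))) (C (Some (o2, o2))).
by rewrite /= !mk10E.
Qed.

Lemma mk10_lin (c n a00 a01 a02 a10 a11 a12 a20 a21 a22 m b00 b01 b02 b10 b11 b12 b20 b21 b22 : F) :
  lin10 c (mk10 n a00 a01 a02 a10 a11 a12 a20 a21 a22) (mk10 m b00 b01 b02 b10 b11 b12 b20 b21 b22)
  = mk10 (c * n + m) (c * a00 + b00) (c * a01 + b01) (c * a02 + b02) (c * a10 + b10)
      (c * a11 + b11) (c * a12 + b12) (c * a20 + b20) (c * a21 + b21) (c * a22 + b22).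
Proof. by rewrite [LHS]K10E !ffunE !mk10E. Qed.

Definition mult3_coef (i k t : nat) : F :=
  match i, k, t with
  | 0, 0, 0 => 1
  | 0, 1, 1 | 0, 2, 2 | 1, 0, 1 | 2, 0, 2 => 2^-1
  | 1, 2, 0 => 1
  | 2, 1, 0 => -1
  | _, _, _ => 0
  end.

Lemma mult3E (i k t : 'I_3) : mult3 F i k t = mult3_coef i k t.
Proof.
have inord0 : inord 0 = o0 by apply: val_inj; rewrite /= inordK.
by case: (ord3P i) => ->; case: (ord3P k) => ->; case: (ord3P t) => ->;
  rewrite /mult3 /= ?inord0 /sc3 /e3 !ffunE /= ?mulr0 ?mulr1.
Qed.

(* The product of K_10 in coordinates, after scaling the alternating form on W
   (which gives both W W -> F e and (.|.) on W) by [df] in the first tensor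
   factor and by [dg] in the second; [df = dg = 1] gives [mul10]. *)
Definition mul10c (df dg aN a00 a01 a02 a10 a11 a12 a20 a21 a22
    bN b00 b01 b02 b10 b11 b12 b20 b21 b22 : F) : K10 F := mk10
 (aN * bN - 3%:R/4%:R * 2^-1 * 2^-1 * (a00 * b00)
   - 3%:R/4%:R * 2^-1 * dg * (a01 * b02 - a02 * b01)
   - 3%:R/4%:R * 2^-1 * df * (a10 * b20 - a20 * b10)
   + 3%:R/4%:R * df * dg * (a11 * b22 - a12 * b21 - a21 * b12 + a22 * b11))
 (aN * b00 + bN * a00 + a00 * b00 + dg * (a01 * b02 - a02 * b01)
   + df * (a10 * b20 - a20 * b10)
   - df * dg * (a11 * b22 - a12 * b21 - a21 * b12 + a22 * b11))
 (aN * b01 + bN * a01 + 2^-1 * (a00 * b01 + a01 * b00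
   + df * (a10 * b21 - a11 * b20 - a20 * b11 + a21 * b10)))
 (aN * b02 + bN * a02 + 2^-1 * (a00 * b02 + a02 * b00
   + df * (a10 * b22 - a12 * b20 - a20 * b12 + a22 * b10)))
 (aN * b10 + bN * a10 + 2^-1 * (a00 * b10 + a10 * b00
   + dg * (- a01 * b12 + a02 * b11 + a11 * b02 - a12 * b01)))
 (aN * b11 + bN * a11
   + 2^-1 * 2^-1 * (a00 * b11 - a01 * b10 + a10 * b01 + a11 * b00))
 (aN * b12 + bN * a12
   + 2^-1 * 2^-1 * (a00 * b12 - a02 * b10 + a10 * b02 + a12 * b00))
 (aN * b20 + bN * a20 + 2^-1 * (a00 * b20 + a20 * b00
   + dg * (- a01 * b22 + a02 * b21 + a21 * b02 - a22 * b01)))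
 (aN * b21 + bN * a21
   + 2^-1 * 2^-1 * (a00 * b21 - a01 * b20 + a20 * b01 + a21 * b00))
 (aN * b22 + bN * a22
   + 2^-1 * 2^-1 * (a00 * b22 - a02 * b20 + a20 * b02 + a22 * b00)).

Definition mul10t (df dg : F) (a b : K10 F) : K10 F :=
  mul10c df dg (cN a) (c00 a) (c01 a) (c02 a) (c10 a) (c11 a) (c12 a) (c20 a) (c21 a) (c22 a)
    (cN b) (c00 b) (c01 b) (c02 b) (c10 b) (c11 b) (c12 b) (c20 b) (c21 b) (c22 b).

Lemma mul10_None (u v : K10 F) :
  mul10 u v None = cN u * cN v +
   \sum_i \sum_j \sum_k \sum_l u (Some (i, j)) * v (Some (k, l)) * sgn F (par j && par k)
     * - (3%:R / 4%:R * form3 F i k * form3 F j l).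
Proof.
rewrite /mul10 !ffunE /= mulr1 !mulr0 !addr0; congr (_ + _).
by do 4 (apply: eq_bigr => ? _); rewrite !ffunE mulr1 add0r.
Qed.

Lemma mul10_Some (u v : K10 F) i j :
  mul10 u v (Some (i, j)) = cN u * v (Some (i, j)) + cN v * u (Some (i, j)) +
   \sum_i' \sum_j' \sum_k \sum_l u (Some (i', j')) * v (Some (k, l)) * sgn F (par j' && par k)
     * (mult3_coef i' k i * mult3_coef j' l j).
Proof.
rewrite /mul10 !ffunE /= mulr0 add0r; congr (_ + _).
by do 4 (apply: eq_bigr => ? _); rewrite !ffunE !mult3E mulr0 subr0.
Qed.

Lemma mul10E (u v : K10 F) : mul10 u v = mul10t 1 1 u v.
Proof.
rewrite [LHS]K10E /mul10t /mul10c; congr mk10;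
  rewrite ?mul10_None ?mul10_Some !big_ord3 /= /form3 /=; ring.
Qed.

Lemma mul10t_mk df dg aN a00 a01 a02 a10 a11 a12 a20 a21 a22
    bN b00 b01 b02 b10 b11 b12 b20 b21 b22 :
  mul10t df dg (mk10 aN a00 a01 a02 a10 a11 a12 a20 a21 a22)
               (mk10 bN b00 b01 b02 b10 b11 b12 b20 b21 b22)
  = mul10c df dg aN a00 a01 a02 a10 a11 a12 a20 a21 a22 bN b00 b01 b02 b10 b11 b12 b20 b21 b22.
Proof. by rewrite /mul10t !mk10E. Qed.

Lemma mul10_mk aN a00 a01 a02 a10 a11 a12 a20 a21 a22 bN b00 b01 b02 b10 b11 b12 b20 b21 b22 :
  mul10 (mk10 aN a00 a01 a02 a10 a11 a12 a20 a21 a22)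
        (mk10 bN b00 b01 b02 b10 b11 b12 b20 b21 b22)
  = mul10c 1 1 aN a00 a01 a02 a10 a11 a12 a20 a21 a22 bN b00 b01 b02 b10 b11 b12 b20 b21 b22.
Proof. by rewrite mul10E mul10t_mk. Qed.

Lemma htilE (h : 'M[F]_2) (a : K3 F) :
  (htil h a o0 = a o0) * (htil h a o1 = h 0 0 * a o1 + h 0 1 * a o2)
  * (htil h a o2 = h 1 0 * a o1 + h 1 1 * a o2).
Proof.
have [-> ->] : o1 = lift ord0 0 /\ o2 = lift ord0 1 by split; apply: val_inj.
have -> : o0 = ord0 by apply: val_inj.
by rewrite /htil !ffunE !liftK unlift_none !mulmx2E !mxE.
Qed.

Lemma tensE : (forall a b : K3 F, tens a b None = 0)
  * (forall (a b : K3 F) i j, tens a b (Some (i, j)) = a i * b j).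
Proof. by split=> *; rewrite ffunE. Qed.

Lemma one10E : (one10 F None = 1) * (forall t, one10 F (Some t) = 0).
Proof. by split=> *; rewrite ffunE. Qed.

Lemma PhiSp_mk (f g : 'M[F]_2) (n a00 a01 a02 a10 a11 a12 a20 a21 a22 : F) :
  PhiSp f g (mk10 n a00 a01 a02 a10 a11 a12 a20 a21 a22) = mk10 n a00
  (g 0 0 * a01 + g 0 1 * a02) (g 1 0 * a01 + g 1 1 * a02)
  (f 0 0 * a10 + f 0 1 * a20)
  (f 0 0 * g 0 0 * a11 + f 0 0 * g 0 1 * a12 + f 0 1 * g 0 0 * a21 + f 0 1 * g 0 1 * a22)
  (f 0 0 * g 1 0 * a11 + f 0 0 * g 1 1 * a12 + f 0 1 * g 1 0 * a21 + f 0 1 * g 1 1 * a22)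
  (f 1 0 * a10 + f 1 1 * a20)
  (f 1 0 * g 0 0 * a11 + f 1 0 * g 0 1 * a12 + f 1 1 * g 0 0 * a21 + f 1 1 * g 0 1 * a22)
  (f 1 0 * g 1 0 * a11 + f 1 0 * g 1 1 * a12 + f 1 1 * g 1 0 * a21 + f 1 1 * g 1 1 * a22).
Proof.
rewrite [LHS]K10E; congr mk10;
  rewrite ffunE !big_ord3 /= ?tensE ?one10E ?htilE ?ffunE /= !mk10E; ring.
Qed.

Lemma delta_mk (n a00 a01 a02 a10 a11 a12 a20 a21 a22 : F) :
  delta (mk10 n a00 a01 a02 a10 a11 a12 a20 a21 a22)
  = mk10 n a00 a10 a20 a01 (- a11) (- a21) a02 (- a12) (- a22).
Proof. by rewrite [LHS]K10E; congr mk10; rewrite ffunE /= !mk10E /sgn /= ?mul1r ?mulN1r. Qed.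

Lemma PhiSp_mul10 (f g : 'M[F]_2) (u v : K10 F) :
  mul10 (PhiSp f g u) (PhiSp f g v) = PhiSp f g (mul10t (\det f) (\det g) u v).
Proof.
move: u v; elim10; elim10.
rewrite !det_mx22 mul10t_mk !PhiSp_mk !mul10_mk /mul10c.
congr mk10; ring.
Qed.

Lemma delta_mul10 (u v : K10 F) : mul10 (delta u) (delta v) = delta (mul10 u v).
Proof.
move: u v; elim10; elim10.
rewrite !delta_mk !mul10_mk /mul10c delta_mk; congr mk10; ring.
Qed.

Lemma PhiSp_comp (f g f' g' : 'M[F]_2) (v : K10 F) :
  PhiSp f g (PhiSp f' g' v) = PhiSp (f *m f') (g *m g') v.
Proof. by move: v; elim10; rewrite !PhiSp_mk !mulmx2E; congr mk10; ring. Qed.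

Lemma delta_PhiSp (f g : 'M[F]_2) (v : K10 F) : delta (PhiSp f g v) = PhiSp g f (delta v).
Proof. by move: v; elim10; rewrite PhiSp_mk !delta_mk PhiSp_mk; congr mk10; ring. Qed.

Lemma deltaK : involutive (@delta F).
Proof. by elim10; rewrite !delta_mk !opprK. Qed.

Lemma PhiSp1 (v : K10 F) : PhiSp 1%:M 1%:M v = v.
Proof. by move: v; elim10; rewrite PhiSp_mk !mxE /=; congr mk10; ring. Qed.

Lemma PhiSp_lin (f g : 'M[F]_2) c (u v : K10 F) :
  PhiSp f g (lin10 c u v) = lin10 c (PhiSp f g u) (PhiSp f g v).
Proof. by move: u v; elim10; elim10; rewrite mk10_lin !PhiSp_mk mk10_lin; congr mk10; ring. Qed.

Lemma delta_lin c (u v : K10 F) : delta (lin10 c u v) = lin10 c (delta u) (delta v).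
Proof. by move: u v; elim10; elim10; rewrite mk10_lin !delta_mk mk10_lin; congr mk10; ring. Qed.

Lemma even10_mk (n a00 a01 a02 a10 a11 a12 a20 a21 a22 : F) :
  is_even10 (mk10 n a00 a01 a02 a10 a11 a12 a20 a21 a22) <->
  [/\ a01 = 0, a02 = 0, a10 = 0 & a20 = 0].
Proof.
split=> [H|[h01 h02 h10 h20] i j].
  by split; [move: (H o0 o1 isT) | move: (H o0 o2 isT) | move: (H o1 o0 isT)
    | move: (H o2 o0 isT)]; rewrite mk10E.
by case: (ord3P i) => ->; case: (ord3P j) => -> //= _; rewrite mk10E.
Qed.

Lemma odd10_mk (n a00 a01 a02 a10 a11 a12 a20 a21 a22 : F) :
  is_odd10 (mk10 n a00 a01 a02 a10 a11 a12 a20 a21 a22) <->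
  [/\ n = 0, a00 = 0, a11 = 0, a12 = 0 & a21 = 0 /\ a22 = 0].
Proof.
split=> [[hN H]|[hN h00 h11 h12 [h21 h22]]].
  rewrite mk10E in hN; split=> //; last split;
    [move: (H o0 o0 erefl) | move: (H o1 o1 erefl) | move: (H o1 o2 erefl)
    | move: (H o2 o1 erefl) | move: (H o2 o2 erefl)]; rewrite mk10E; apply.
split=> [|i j]; first by rewrite mk10E.
by case: (ord3P i) => ->; case: (ord3P j) => -> //= _; rewrite mk10E.
Qed.

(* [ab] stands for a (x) b, with a, b in {e, x, y}. *)
Definition ee : K10 F := mk10 0 1 0 0 0 0 0 0 0 0.
Definition ex : K10 F := mk10 0 0 1 0 0 0 0 0 0 0.
Definition ey : K10 F := mk10 0 0 0 1 0 0 0 0 0 0.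
Definition xe : K10 F := mk10 0 0 0 0 1 0 0 0 0 0.
Definition ye : K10 F := mk10 0 0 0 0 0 0 0 1 0 0.
Definition xx : K10 F := mk10 0 0 0 0 0 1 0 0 0 0.
Definition xy : K10 F := mk10 0 0 0 0 0 0 1 0 0 0.
Definition yx : K10 F := mk10 0 0 0 0 0 0 0 0 1 0.
Definition yy : K10 F := mk10 0 0 0 0 0 0 0 0 0 1.

Definition zero10 : K10 F := [ffun => 0].
Definition span1ee (a b : F) : K10 F := mk10 a b 0 0 0 0 0 0 0 0.

(* For odd [u]: membership in e (x) W, resp. W (x) e. *)
Definition in_eW (u : K10 F) := c10 u = 0 /\ c20 u = 0.
Definition in_We (u : K10 F) := c01 u = 0 /\ c02 u = 0.

Lemma zero10_mk : zero10 = mk10 0 0 0 0 0 0 0 0 0 0.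
Proof. by rewrite [LHS]K10E !ffunE. Qed.

Lemma one10_mk : one10 F = mk10 1 0 0 0 0 0 0 0 0 0.
Proof. by rewrite [LHS]K10E !one10E. Qed.

(** * The automorphisms Phi_w *)

Lemma aut_comp (phi psi : K10 F -> K10 F) :
  isAut10 phi -> isAut10 psi -> isAut10 (phi \o psi).
Proof.
case=> l1 b1 m1 e1 o1 [l2 b2 m2 e2 o2]; split=> /=.
- by move=> c u v; rewrite l2 l1.
- exact: bij_comp.
- by move=> u v; rewrite m2 m1.
- by move=> v /e2 /e1.
- by move=> v /o2 /o1.
Qed.

Lemma PhiSp_aut (f g : 'M[F]_2) : \det f = 1 -> \det g = 1 -> isAut10 (PhiSp f g).
Proof.
move=> df dg; have [uf ug] : f \in unitmx /\ g \in unitmx by rewrite !unitmxE df dg unitr1.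
split.
- exact: PhiSp_lin.
- by exists (PhiSp (invmx f) (invmx g)) => v;
    rewrite PhiSp_comp ?mulVmx ?mulmxV // PhiSp1.
- by move=> u v; rewrite PhiSp_mul10 df dg -mul10E.
- by elim10; rewrite even10_mk => -[-> -> -> ->]; rewrite PhiSp_mk even10_mk; split; ring.
- elim10; rewrite odd10_mk => -[-> -> -> -> [-> ->]].
  by rewrite PhiSp_mk odd10_mk; split; try split; ring.
Qed.

Lemma delta_aut : isAut10 (@delta F).
Proof.
split.
- exact: delta_lin.
- by exists (@delta F); apply: deltaK.
- by move=> u v; rewrite delta_mul10.
- by elim10; rewrite even10_mk => -[-> -> -> ->]; rewrite delta_mk even10_mk.
- by elim10; rewrite odd10_mk => -[-> -> -> -> [-> ->]]; rewrite delta_mk odd10_mk !oppr0.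
Qed.

Lemma Phi_aut (w : 'M[F]_2 * 'M[F]_2 * bool) : inG w -> isAut10 (Phi w).
Proof.
case: w => [[f g] [|]] [/isSpP df /isSpP dg]; rewrite /Phi /=.
- exact: aut_comp (PhiSp_aut df dg) delta_aut.
- exact: PhiSp_aut.
Qed.

Lemma Phi_Gmul (w1 w2 : 'M[F]_2 * 'M[F]_2 * bool) : Phi (Gmul w1 w2) =1 Phi w1 \o Phi w2.
Proof.
case: w1 w2 => [[f1 g1] b1] [[f2 g2] b2] v.
by case: b1; case: b2; rewrite /Gmul /Phi /= ?delta_PhiSp ?deltaK PhiSp_comp.
Qed.

Lemma PhiSp_odd_basis (f g : 'M[F]_2) :
  [/\ PhiSp f g ex = mk10 0 0 (g 0 0) (g 1 0) 0 0 0 0 0 0,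
      PhiSp f g ey = mk10 0 0 (g 0 1) (g 1 1) 0 0 0 0 0 0,
      PhiSp f g xe = mk10 0 0 0 0 (f 0 0) 0 0 (f 1 0) 0 0 &
      PhiSp f g ye = mk10 0 0 0 0 (f 0 1) 0 0 (f 1 1) 0 0].
Proof. by split; rewrite PhiSp_mk ?mulr0 ?mulr1 ?addr0 ?add0r. Qed.

Lemma delta_odd_basis : [/\ delta ex = xe, delta ey = ye, delta xe = ex & delta ye = ey].
Proof. by split; rewrite delta_mk oppr0. Qed.

Lemma Phi_inj (w1 w2 : 'M[F]_2 * 'M[F]_2 * bool) : inG w1 -> inG w2 -> Phi w1 =1 Phi w2 -> w1 = w2.
Proof.
case: w1 w2 => [[f1 g1] b1] [[f2 g2] b2] [/= [uf1 _] [ug1 _]] _ E.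
have [A1 A2 A3 A4] := PhiSp_odd_basis f1 g1.
have [B1 B2 B3 B4] := PhiSp_odd_basis f2 g2.
have [D1 D2 D3 D4] := delta_odd_basis.
move: (E ex) (E ey) (E xe) (E ye) => {E}; rewrite /Phi /=.
case: b1 b2 => [] []; rewrite ?D1 ?D2 ?D3 ?D4 A1 A2 A3 A4 B1 B2 B3 B4
  => /mk10_inj[_ _ x1 x2 [x3 _ _ x4 _]] /mk10_inj[_ _ y1 y2 [y3 _ _ y4 _]]
     /mk10_inj[_ _ z1 z2 [z3 _ _ z4 _]] /mk10_inj[_ _ t1 t2 [t3 _ _ t4 _]].
- by rewrite (eq_mx22 x3 y3 x4 y4) (eq_mx22 z1 t1 z2 t2).
- by case: (unitmx22_col0 uf1 x3 x4).
- by case: (unitmx22_col0 ug1 x1 x2).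
- by rewrite (eq_mx22 z3 t3 z4 t4) (eq_mx22 x1 y1 x2 y2).
Qed.

(** * Automorphisms of K_10 *)

Lemma K10_basis_expansion (v : K10 F) :
  v = lin10 (cN v) (one10 F) (lin10 (c00 v) ee (lin10 (c01 v) ex (lin10 (c02 v) ey
     (lin10 (c10 v) xe (lin10 (c11 v) xx (lin10 (c12 v) xy (lin10 (c20 v) ye
     (lin10 (c21 v) yx (lin10 (c22 v) yy zero10))))))))).
Proof.
rewrite /ee /ex /ey /xe /xx /xy /ye /yx /yy zero10_mk one10_mk !mk10_lin [LHS]K10E.
by congr mk10; ring.
Qed.

Lemma K10_even_odd (v : K10 F) :
  exists2 ve, is_even10 ve & exists2 vo, is_odd10 vo & v = lin10 1 ve vo.
Proof.
move: v; apply: K10_ind => n a00 a01 a02 a10 a11 a12 a20 a21 a22.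
exists (mk10 n a00 0 0 0 a11 a12 0 a21 a22); first by rewrite even10_mk.
exists (mk10 0 0 a01 a02 a10 0 0 a20 0 0); first by rewrite odd10_mk.
by rewrite mk10_lin; congr mk10; ring.
Qed.

Lemma even_odd10_eq0 (v : K10 F) : is_even10 v -> is_odd10 v -> v = zero10.
Proof.
move: v; elim10; rewrite even10_mk odd10_mk zero10_mk.
by move=> [-> -> -> ->] [-> -> -> -> [-> ->]].
Qed.

Lemma odd10_lin c (u v : K10 F) : is_odd10 u -> is_odd10 v -> is_odd10 (lin10 c u v).
Proof.
move: u v; elim10; elim10; rewrite !odd10_mk.
by move=> [-> -> -> -> [-> ->]] [-> -> -> -> [-> ->]]; rewrite mk10_lin odd10_mk mulr0 addr0.
Qed.

Lemma mul10_1r (u : K10 F) : mul10 u (one10 F) = u.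
Proof. by move: u; elim10; rewrite one10_mk mul10_mk /mul10c; congr mk10; ring. Qed.

Lemma mul10_1l (u : K10 F) : mul10 (one10 F) u = u.
Proof. by move: u; elim10; rewrite one10_mk mul10_mk /mul10c; congr mk10; ring. Qed.

Lemma mul_ee_odd (z : K10 F) : is_odd10 z -> mul10 ee z = lin10 2^-1 z zero10.
Proof.
move: z; elim10; rewrite odd10_mk => -[-> -> -> -> [-> ->]].
by rewrite /ee mul10_mk /mul10c zero10_mk mk10_lin; congr mk10; ring.
Qed.

Lemma span1ee_lin (a b : F) : span1ee a b = lin10 a (one10 F) (lin10 b ee zero10).
Proof. by rewrite /span1ee /ee one10_mk zero10_mk !mk10_lin; congr mk10; ring. Qed.

Lemma mul_ex_ey : mul10 ex ey = span1ee (- (3%:R / 4%:R * 2^-1)) 1.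
Proof. by rewrite /ex /ey mul10_mk /mul10c /span1ee; congr mk10; ring. Qed.

Lemma mul_xe_ye : mul10 xe ye = mul10 ex ey.
Proof. by rewrite /ex /ey /xe /ye !mul10_mk /mul10c; congr mk10; ring. Qed.

Lemma four_neq0 : (4%:R : F) != 0.
Proof. by rewrite -[4%N]/(2 * 2)%N natrM mulf_neq0. Qed.

Lemma WW_products :
  [/\ xx = lin10 (- 4%:R) (mul10 ex xe) zero10, xy = lin10 (- 4%:R) (mul10 ey xe) zero10,
      yx = lin10 (- 4%:R) (mul10 ex ye) zero10 & yy = lin10 (- 4%:R) (mul10 ey ye) zero10].
Proof.
by split; rewrite /ex /ey /xe /ye /xx /xy /yx /yy
  mul10_mk /mul10c zero10_mk mk10_lin; congr mk10; field; rewrite ?four_neq0 ?char2.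
Qed.

Lemma ee_unique (q u v : K10 F) : is_even10 q -> is_odd10 u -> is_odd10 v ->
  mul10 q ex = lin10 2^-1 ex zero10 -> mul10 q ey = lin10 2^-1 ey zero10 ->
  mul10 u v = lin10 (- (3%:R / 4%:R * 2^-1)) (one10 F) (lin10 1 q zero10) -> q = ee.
Proof.
move: q u v; elim10; elim10; elim10.
rewrite even10_mk !odd10_mk => -[-> -> -> ->] [-> -> -> -> [-> ->]] [-> -> -> -> [-> ->]].
rewrite /ex /ey /ee one10_mk zero10_mk !mul10_mk /mul10c !mk10_lin.
move=> /mk10_inj[_ _ hx _ [hx10 _ _ hx20 _]] /mk10_inj[_ _ _ _ [hy10 _ _ hy20 _]].
move=> /mk10_inj[huvN huv00 _ _ _]; congr mk10.
- apply: (lincomb3_eq0 (a := - 3%:R) (b := - 4%:R) (c := - (3%:R / 2%:R)) hx huvN huv00).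
  by field; rewrite ?four_neq0 ?char2.
- apply: subr0_eq; apply: (lincomb3_eq0 (a := 8%:R) (b := 8%:R) (c := 3%:R) hx huvN huv00).
  by field; rewrite ?four_neq0 ?char2.
- by apply: (lincomb1_eq0 (a := 2%:R) hy10); field.
- by apply: (lincomb1_eq0 (a := - 2%:R) hx10); field.
- by apply: (lincomb1_eq0 (a := 2%:R) hy20); field.
- by apply: (lincomb1_eq0 (a := - 2%:R) hx20); field.
Qed.

Lemma odd_basis : [/\ is_odd10 ex, is_odd10 ey, is_odd10 xe & is_odd10 ye].
Proof. by split; rewrite odd10_mk. Qed.

Lemma odd_eW_mk (u : K10 F) : is_odd10 u -> in_eW u -> u = mk10 0 0 (c01 u) (c02 u) 0 0 0 0 0 0.
Proof. by move: u; elim10; rewrite odd10_mk /in_eW !mk10E => -[-> -> -> -> [-> ->]] [-> ->]. Qed.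

Lemma odd_We_mk (u : K10 F) : is_odd10 u -> in_We u -> u = mk10 0 0 0 0 (c10 u) 0 0 (c20 u) 0 0.
Proof. by move: u; elim10; rewrite odd10_mk /in_We !mk10E => -[-> -> -> -> [-> ->]] [-> ->]. Qed.

(* The [ee]-coordinate of [u v] is the sum of the two minors formed by the
   e (x) W and by the W (x) e coordinates of [u] and [v], so one of them is
   nonzero; the vanishing W (x) W coordinates then kill the other half. *)
Lemma odd_pair_halves (u v : K10 F) : is_odd10 u -> is_odd10 v -> mul10 u v = mul10 ex ey ->
  (in_eW u /\ in_eW v) \/ (in_We u /\ in_We v).
Proof.
move: u v; apply: K10_ind => aN a00 a01 a02 a10 a11 a12 a20 a21 a22.
apply: K10_ind => bN b00 b01 b02 b10 b11 b12 b20 b21 b22.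
rewrite !odd10_mk => -[-> -> -> -> [-> ->]] [-> -> -> -> [-> ->]].
rewrite mul_ex_ey /span1ee mul10_mk /mul10c => /mk10_inj[_ h00 _ _ [_ h11 h12 _ [h21 h22]]].
rewrite /in_eW /in_We !mk10E.
have hD : (a01 * b02 - a02 * b01) + (a10 * b20 - a20 * b10) = 1.
  by apply: subr0_eq; apply: (lincomb1_eq0 (a := 1) h00); ring.
have [D1_0|D1_neq0] := eqVneq (a01 * b02 - a02 * b01) 0; [right|left].
  have D2_neq0 : a10 * b20 - a20 * b10 != 0.
    by apply/eqP => D2_0; move: hD; rewrite D1_0 D2_0 addr0 => /eqP; rewrite eq_sym oner_eq0.
  do 2 split; apply: (mulIf D2_neq0); rewrite mul0r.
  - by apply: (lincomb2_eq0 (a := - (4%:R * a10)) (b := 4%:R * a20) h21 h11); field.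
  - by apply: (lincomb2_eq0 (a := - (4%:R * a10)) (b := 4%:R * a20) h22 h12); field.
  - by apply: (lincomb2_eq0 (a := - (4%:R * b10)) (b := 4%:R * b20) h21 h11); field.
  - by apply: (lincomb2_eq0 (a := - (4%:R * b10)) (b := 4%:R * b20) h22 h12); field.
do 2 split; apply: (mulIf D1_neq0); rewrite mul0r.
- by apply: (lincomb2_eq0 (a := 4%:R * a01) (b := - (4%:R * a02)) h12 h11); field.
- by apply: (lincomb2_eq0 (a := 4%:R * a01) (b := - (4%:R * a02)) h22 h21); field.
- by apply: (lincomb2_eq0 (a := 4%:R * b01) (b := - (4%:R * b02)) h12 h11); field.
- by apply: (lincomb2_eq0 (a := 4%:R * b01) (b := - (4%:R * b02)) h22 h21); field.
Qed.

Lemma odd_mul10_c00 (u v : K10 F) : is_odd10 u -> is_odd10 v ->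
  c00 (mul10 u v) = (c01 u * c02 v - c02 u * c01 v) + (c10 u * c20 v - c20 u * c10 v).
Proof.
move: u v; elim10; elim10; rewrite !odd10_mk => -[-> -> -> -> [-> ->]] [-> -> -> -> [-> ->]].
by rewrite mul10_mk /mul10c !mk10E; ring.
Qed.

Lemma c00_mul_ex_ey : c00 (mul10 ex ey) = 1.
Proof. by rewrite mul_ex_ey mk10E. Qed.

Lemma mul_same_half (u v : K10 F) : is_odd10 u -> is_odd10 v ->
  (in_eW u /\ in_eW v) \/ (in_We u /\ in_We v) -> exists a b, mul10 u v = span1ee a b.
Proof.
move: u v; elim10; elim10; rewrite !odd10_mk => -[-> -> -> -> [-> ->]] [-> -> -> -> [-> ->]].
rewrite /in_eW /in_We !mk10E mul10_mk /mul10c /span1ee.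
by case=> -[[-> ->] [-> ->]]; do 2 eexists; congr mk10; try reflexivity; ring.
Qed.

Section Automorphism.
Variable phi : K10 F -> K10 F.
Hypothesis phiA : isAut10 phi.

Lemma aut_lin c (u v : K10 F) : phi (lin10 c u v) = lin10 c (phi u) (phi v).
Proof. by case: phiA. Qed.

Lemma aut_mul (u v : K10 F) : phi (mul10 u v) = mul10 (phi u) (phi v).
Proof. by case: phiA. Qed.

Lemma aut_zero : phi zero10 = zero10.
Proof.
have lin0 (w : K10 F) : lin10 (-1) w w = zero10.
  by apply/ffunP => t; rewrite !ffunE mulN1r addNr.
by have := aut_lin (-1) zero10 zero10; rewrite !lin0.
Qed.

Lemma aut_one : phi (one10 F) = one10 F.
Proof.
have [_ [psi _ psiK] _ _ _] := phiA.
by rewrite -[LHS]mul10_1r -{2}(psiK (one10 F)) -aut_mul mul10_1l psiK.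
Qed.

Lemma aut_odd_preimage (u : K10 F) : is_odd10 u -> exists2 z, is_odd10 z & phi z = u.
Proof.
move=> odd_u; have [_ [psi phiK psiK] _ ev od] := phiA.
have [ze even_ze [zo odd_zo Ez]] := K10_even_odd (psi u).
have Eu : u = lin10 1 (phi ze) (phi zo) by rewrite -aut_lin -Ez psiK.
have ze0 : ze = zero10.
  apply: (can_inj phiK); rewrite aut_zero; apply: even_odd10_eq0; first exact: ev.
  have -> : phi ze = lin10 (-1) (phi zo) u by apply/ffunP => t; rewrite Eu !ffunE; ring.
  exact: odd10_lin (od _ odd_zo) odd_u.
exists zo => //; rewrite Eu ze0 aut_zero.
by apply/ffunP => t; rewrite !ffunE mul1r add0r.
Qed.

(* [phi] maps the odd part onto itself, so [phi ee] acts on it as [ee] does. *)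
Lemma aut_ee : phi ee = ee.
Proof.
have [_ _ _ ev od] := phiA; have [ox oy _ _] := odd_basis.
have half u : is_odd10 u -> mul10 (phi ee) u = lin10 2^-1 u zero10.
  by case/aut_odd_preimage=> z oz <-; rewrite -aut_mul mul_ee_odd // aut_lin aut_zero.
apply: (ee_unique _ (od _ ox) (od _ oy) (half _ ox) (half _ oy)).
  by apply: ev; rewrite /ee even10_mk.
by rewrite -aut_mul mul_ex_ey span1ee_lin !aut_lin aut_one aut_zero.
Qed.

Lemma aut_span1ee (a b : F) : phi (span1ee a b) = span1ee a b.
Proof. by rewrite span1ee_lin !aut_lin aut_one aut_ee aut_zero. Qed.

Lemma aut_mul_ex_ey : mul10 (phi ex) (phi ey) = mul10 ex ey.
Proof. by rewrite -aut_mul mul_ex_ey aut_span1ee. Qed.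

Lemma aut_mul_xe_ye : mul10 (phi xe) (phi ye) = mul10 ex ey.
Proof. by rewrite -aut_mul mul_xe_ye mul_ex_ey aut_span1ee. Qed.

Lemma aut_separates_halves :
  ~ ((in_eW (phi ex) /\ in_eW (phi xe)) \/ (in_We (phi ex) /\ in_We (phi xe))).
Proof.
move=> same; have [_ [psi phiK _] _ _ od] := phiA; have [ox _ oxe _] := odd_basis.
have [a [b Eab]] := mul_same_half (od _ ox) (od _ oxe) same.
have Eexxe : mul10 ex xe = span1ee a b.
  by apply: (can_inj phiK); rewrite aut_mul Eab aut_span1ee.
have [Exx _ _ _] := WW_products; move: Exx.
rewrite Eexxe /xx /span1ee zero10_mk mk10_lin => /mk10_inj[_ _ _ _ [_ /eqP]].
by rewrite mulr0 addr0 oner_eq0.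
Qed.
End Automorphism.

Lemma aut_eq_on_odd_basis (phi psi : K10 F -> K10 F) : isAut10 phi -> isAut10 psi ->
  phi ex = psi ex -> phi ey = psi ey -> phi xe = psi xe -> phi ye = psi ye -> phi =1 psi.
Proof.
move=> A B hx hy hxe hye v; have [Exx Exy Eyx Eyy] := WW_products.
rewrite (K10_basis_expansion v) Exx Exy Eyx Eyy !(aut_lin A) !(aut_lin B) !(aut_mul A) !(aut_mul B).
by rewrite (aut_one A) (aut_one B) (aut_ee A) (aut_ee B) (aut_zero A) (aut_zero B) hx hy hxe hye.
Qed.

Lemma aut_eW_We (phi : K10 F -> K10 F) : isAut10 phi ->
  in_eW (phi ex) -> in_eW (phi ey) -> in_We (phi xe) -> in_We (phi ye) ->
  exists f g, inG (f, g, false) /\ phi =1 Phi (f, g, false).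
Proof.
move=> A hx hy hxe hye; have [_ _ _ _ od] := A; have [ox oy oxe oye] := odd_basis.
have Ex := odd_eW_mk (od _ ox) hx; have Ey := odd_eW_mk (od _ oy) hy.
have Exe := odd_We_mk (od _ oxe) hxe; have Eye := odd_We_mk (od _ oye) hye.
pose f := mx22 (c10 (phi xe)) (c10 (phi ye)) (c20 (phi xe)) (c20 (phi ye)).
pose g := mx22 (c01 (phi ex)) (c01 (phi ey)) (c02 (phi ex)) (c02 (phi ey)).
have [f00 f01 f10 f11] := mx22E (c10 (phi xe)) (c10 (phi ye)) (c20 (phi xe)) (c20 (phi ye)).
have [g00 g01 g10 g11] := mx22E (c01 (phi ex)) (c01 (phi ey)) (c02 (phi ex)) (c02 (phi ey)).
have fg_Sp : inG (f, g, false).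
  split; apply/isSpP; rewrite det_mx22 ?f00 ?f01 ?f10 ?f11 ?g00 ?g01 ?g10 ?g11.
  - move: hxe hye (odd_mul10_c00 (od _ oxe) (od _ oye)) => [-> ->] [-> ->].
    by rewrite (aut_mul_xe_ye A) c00_mul_ex_ey => E; rewrite [RHS]E; ring.
  - move: hx hy (odd_mul10_c00 (od _ ox) (od _ oy)) => [-> ->] [-> ->].
    by rewrite (aut_mul_ex_ey A) c00_mul_ex_ey => E; rewrite [RHS]E; ring.
exists f, g; split => //; have [P1 P2 P3 P4] := PhiSp_odd_basis f g.
apply: (aut_eq_on_odd_basis A (Phi_aut fg_Sp));
  rewrite /Phi /= ?P1 ?P2 ?P3 ?P4 ?f00 ?f01 ?f10 ?f11 ?g00 ?g01 ?g10 ?g11;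
  [exact: Ex | exact: Ey | exact: Exe | exact: Eye].
Qed.

Lemma aut_classify (phi : K10 F -> K10 F) : isAut10 phi -> exists2 w, inG w & phi =1 Phi w.
Proof.
move=> A; have [_ _ _ _ od] := A; have [ox oy oxe oye] := odd_basis.
have sep := aut_separates_halves A.
case: (odd_pair_halves (od _ ox) (od _ oy) (aut_mul_ex_ey A)) => -[hx hy];
  case: (odd_pair_halves (od _ oxe) (od _ oye) (aut_mul_xe_ye A)) => -[hxe hye].
- by case: sep; left.
- by have [f [g [HG E]]] := aut_eW_We A hx hy hxe hye; exists (f, g, false).
- have [D1 D2 D3 D4] := delta_odd_basis.
  have [f [g [HG E]]] : exists f g, inG (f, g, false) /\ phi \o @delta F =1 Phi (f, g, false).
    by apply: (aut_eW_We (aut_comp A delta_aut)); rewrite /= ?D1 ?D2 ?D3 ?D4.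
  exists (f, g, true) => // v.
  by have := E (delta v); rewrite /= deltaK /Phi /= => ->.
- by case: sep; right.
Qed.
End Kac.

Theorem theorem3p3 (F : fieldType)
  (char2 : (2%:R : F) != 0) (char3 : (3%:R : F) != 0)
  (sq : forall a : F, exists b : F, a = b * b) :
  [/\ (forall w : 'M[F]_2 * 'M[F]_2 * bool, inG w -> isAut10 (Phi w)),
      (forall w1 w2 : 'M[F]_2 * 'M[F]_2 * bool, inG w1 -> inG w2 ->
         Phi (Gmul w1 w2) =1 Phi w1 \o Phi w2),
      (forall w1 w2 : 'M[F]_2 * 'M[F]_2 * bool, inG w1 -> inG w2 ->
         Phi w1 =1 Phi w2 -> w1 = w2) &
      (forall phi : K10 F -> K10 F, isAut10 phi ->
         exists2 w : 'M[F]_2 * 'M[F]_2 * bool, inG w & phi =1 Phi w)].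
Proof.
split.
- exact: Phi_aut.
- by move=> w1 w2 _ _; apply: Phi_Gmul.
- exact: Phi_inj.
- exact: aut_classify char2.
Qed.
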